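(* Let $\mathcal{S}_n(2413,3142)$ denote the set of permutations of $\{1,\dots,n\}$ (in one-line notation) avoiding both patterns $2413$ and $3142$, and let $S(x)=\sum_{n\ge 0}\lvert\mathcal{S}_n(2413,3142)\rvert x^n$, with the convention that the $n=0$ coefficient is $1$. For $1\le \ell\le n$ let $\mathcal{S}_n^{\ell\mapsto 1}(2413,3142)=\{\sigma\in \mathcal{S}_n(2413,3142):\sigma(\ell)=1\}$. Then the generating function \[ g(x,u)=\sum_{n=1}^\infty\sum_{\ell=1}^n \lvert\mathcal{S}_n^{\ell\mapsto 1}(2413,3142)\rvert\, u^{\ell}x^n \] satisfies \[ g(x,u)=\frac{xu\,S(x)S(xu)}{S(x)+S(xu)-S(x)S(xu)}. \]
   Context: A permutation $\sigma$ avoids a pattern $p$ if no subsequence of its one-line notation is order-isomorphic to $p$. Permutations avoiding $2413$ and $3142$ are called separable permutations. *)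

From mathcomp Require Import all_boot all_order all_fingroup all_algebra.
Set Implicit Arguments. Unset Strict Implicit. Unset Printing Implicit Defensive.
Import GRing.Theory Num.Theory.

(* Permutations of {1..n} are modelled by 'S_n = {perm 'I_n} (0-indexed:
   position i : 'I_n stands for i+1, value v stands for v+1). *)

Definition contains_pattern (p : seq nat) (n : nat) (s : 'S_n) : bool :=
  [exists f : {ffun 'I_(size p) -> 'I_n},
     [forall a : 'I_(size p), forall b : 'I_(size p),
        ((a < b)%N ==> (f a < f b)%N) &&
        ((s (f a) < s (f b))%N == (nth 0%N p a < nth 0%N p b)%N)]].

Definition avoids (p : seq nat) (n : nat) (s : 'S_n) : bool :=
  ~~ contains_pattern p s.

Definition separable (n : nat) (s : 'S_n) : bool :=
  avoids [:: 2; 4; 1; 3]%N s && avoids [:: 3; 1; 4; 2]%N s.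

(* |S_n(2413,3142)|; for n = 0 this is 1 (the empty permutation). *)
Definition sep_count (n : nat) : nat := #|[set s : 'S_n | separable s]|.

Definition sep_count_at (n l : nat) : nat :=
  #|[set s : 'S_n | separable s &&
       [exists i : 'I_n, (i.+1 == l) && (val (s i) == 0%N)]]|.

(* Formal power series in two variables x, u with integer coefficients:
   F n l is the coefficient of x^n u^l. *)
Definition bser := nat -> nat -> int.

Definition bser_add (F G : bser) : bser := fun n l => (F n l + G n l)%R.
Definition bser_sub (F G : bser) : bser := fun n l => (F n l - G n l)%R.
Definition bser_mul (F G : bser) : bser := fun n l =>
  (\sum_(i < n.+1) \sum_(j < l.+1) F i j * G (n - i)%N (l - j)%N)%R.
Definition bser_mul_xu (F : bser) : bser := fun n l =>
  match n, l with
  | n'.+1, l'.+1 => F n' l'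
  | _, _ => 0%R
  end.

Definition Sx : bser := fun n l => if l == 0%N then Posz (sep_count n) else 0%R.
Definition Sxu : bser := fun n l => if l == n then Posz (sep_count n) else 0%R.
Definition gxu : bser := fun n l =>
  if (1 <= l <= n)%N then Posz (sep_count_at n l) else 0%R.

From mathcomp Require Import all_boot all_order all_fingroup all_algebra.
From mathcomp Require Import zify ring.
From Stdlib Require Import FunctionalExtensionality.
Set Implicit Arguments. Unset Strict Implicit. Unset Printing Implicit Defensive.

(* Separable permutations of length at least 2 are direct sums or skew sums,
   by induction on the length: without its last entry v the permutation is
   decomposable, and if v neither extends its least decomposition nor lies
   beyond all other entries, it creates an occurrence of 3142 or 2413.
   Let P (resp. Q) count the skew- (resp. sum-) indecomposable separable
   permutations, with x marking the length and u the position of 1.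
   Cutting a permutation at its last skew split writes it as A ⊖ B with B
   skew-indecomposable and containing 1, whose position is shifted by |A|:
   g = S(xu) P. Cutting a skew-indecomposable one of length at least 2 at its
   first sum split gives P = xu + Q (S(x) - 1), and cutting a
   sum-indecomposable one at its last skew split gives Q = xu + (S(xu) - 1) P.
   Eliminating P and Q yields g (S(x) + S(xu) - S(x) S(xu)) = xu S(x) S(xu). *)

(** * Permutations as sequences *)

Definition permseq (s : seq nat) := perm_eq s (iota 0 (size s)).

Lemma permseqE s : permseq s = uniq s && all (gtn (size s)) s.
Proof.
apply/idP/andP => [ps | [us /allP lts]].
  split; first by rewrite (perm_uniq ps) iota_uniq.
  by apply/allP => x; rewrite (perm_mem ps) mem_iota.
apply: uniq_perm; rewrite ?iota_uniq //.
have sub : {subset s <= iota 0 (size s)} by move=> x /lts; rewrite mem_iota.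
by have [] := uniq_min_size us sub; rewrite ?size_iota.
Qed.

Lemma permseq_uniq s : permseq s -> uniq s.
Proof. by rewrite permseqE => /andP[]. Qed.

Lemma permseq_lt s x : permseq s -> x \in s -> x < size s.
Proof. by rewrite permseqE => /andP[_ /allP]; apply. Qed.

Lemma permseq_mem0 s : permseq s -> 0 < size s -> 0 \in s.
Proof. by move=> ps s0; rewrite (perm_mem ps) mem_iota. Qed.

Lemma count_gtn_iota x n : x <= n -> count (gtn x) (iota 0 n) = x.
Proof. by move=> xn; rewrite -size_filter -[x in gtn x]add0n filter_iota_ltn ?size_iota. Qed.

Definition rank (s : seq nat) x := count (gtn x) s.

Definition std (s : seq nat) := map (rank s) s.

Lemma rank_permseq s x : permseq s -> x <= size s -> rank s x = x.
Proof. by rewrite /rank => /seq.permP-> ?; apply: count_gtn_iota. Qed.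

Lemma rank_lt s x y : x \in s -> x < y -> rank s x < rank s y.
Proof.
move=> xs ltxy; pose mid := [pred z | x <= z < y].
have -> : rank s y = rank s x + count mid s.
  rewrite /rank -count_predUI (@eq_count _ (predI _ _) pred0) => [|z /=]; last by lia.
  by rewrite count_pred0 addn0; apply: eq_count => z /=; lia.
by rewrite -[X in X < _]addn0 ltn_add2l -has_count; apply/hasP; exists x; rewrite //= leqnn.
Qed.

Lemma rank_mono s : {in s &, {mono rank s : x y / x <= y}}.
Proof. by apply: leq_mono_in => x y xs _; apply: rank_lt. Qed.

Lemma size_std s : size (std s) = size s.
Proof. exact: size_map. Qed.

Lemma permseq_std s : uniq s -> permseq (std s).
Proof.
move=> us; rewrite permseqE size_std; apply/andP; split.
  rewrite /std map_inj_in_uniq // => x y xs ys e.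
  have := rank_mono xs ys; have := rank_mono ys xs; rewrite e leqnn => yx xy.
  by apply: anti_leq; rewrite -xy -yx.
apply/allP => _ /mapP[x xs ->]; change (rank s x < size s).
rewrite /rank -(count_predC (gtn x)) -[X in X < _]addn0 ltn_add2l.
by rewrite -has_count; apply/hasP; exists x; rewrite //= ltnn.
Qed.

Lemma std_permseq s : permseq s -> std s = s.
Proof.
move=> ps; rewrite /std map_id_in // => x xs.
by apply: rank_permseq => //; apply: ltnW (permseq_lt ps xs).
Qed.

Lemma std_map f s : {in s &, {mono f : x y / x < y}} -> std (map f s) = std s.
Proof.
move=> fmono; rewrite /std /rank -map_comp; apply/eq_in_map => x xs /=.
by rewrite count_map; apply: eq_in_count => y ys /=; apply: fmono.
Qed.

Definition shift c (s : seq nat) := map (addn c) s.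

Lemma permseq_shift c s : permseq s -> perm_eq (shift c s) (iota c (size s)).
Proof. by move=> ps; rewrite -[c in iota c _]addn0 iotaDl; apply: perm_map. Qed.

Lemma std_shift c s : permseq s -> std (shift c s) = s.
Proof. by move=> ps; rewrite std_map ?std_permseq //; apply: in2W; apply: ltn_add2l. Qed.

(** * Patterns of length four *)

Definition occurs (R : nat -> nat -> nat -> nat -> bool) (s : seq nat) i j k l :=
  [&& i < j, j < k, k < l, l < size s &
      R (nth 0 s i) (nth 0 s j) (nth 0 s k) (nth 0 s l)].

Definition has_pat R (s : seq nat) :=
  let I := iota 0 (size s) in
  has (fun i => has (fun j => has (fun k => has (occurs R s i j k) I) I) I) I.

Lemma has_patP R s : reflect (exists i j k l, occurs R s i j k l) (has_pat R s).
Proof.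
apply: (iffP idP) => [|[i [j [k [l occ]]]]].
  by case/hasP=> i _ /hasP[j _ /hasP[k _ /hasP[l _ occ]]]; exists i, j, k, l.
have /and5P[ij jk kl ls _] := occ.
by apply/hasP; exists i; [|apply/hasP; exists j; [|apply/hasP; exists k; [|apply/hasP; exists l]]];
  rewrite ?mem_iota //; lia.
Qed.

Lemma eq_has_pat R R' s : (forall a b c d, R a b c d = R' a b c d) -> has_pat R s = has_pat R' s.
Proof.
by move=> RR'; rewrite /has_pat /occurs; do 4!apply: eq_has => ? /=; rewrite RR'.
Qed.

Lemma occurs_take R s m i j k l :
  l < m -> occurs R (take m s) i j k l = occurs R s i j k l.
Proof.
move=> lm; rewrite /occurs size_take_min.
have -> : (l < minn m (size s)) = (l < size s) by lia.
by apply/and5P/and5P => -[ij jk kl ls]; rewrite !nth_take //; try lia; split.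
Qed.

Lemma occurs_drop R s m i j k l :
  occurs R (drop m s) i j k l = occurs R s (m + i) (m + j) (m + k) (m + l).
Proof. by rewrite /occurs size_drop !nth_drop !ltn_add2l ltn_subRL. Qed.

Lemma has_pat_take R s m : has_pat R (take m s) -> has_pat R s.
Proof.
case/has_patP=> i [j [k [l occ]]]; apply/has_patP; exists i, j, k, l.
have /and5P[_ _ _ + _] := occ; rewrite size_take_min => lm.
by rewrite -(occurs_take _ _ _ _ _ (_ : l < m)) //; lia.
Qed.

Lemma has_pat_drop R s m : has_pat R (drop m s) -> has_pat R s.
Proof.
case/has_patP=> i [j [k [l]]]; rewrite occurs_drop => occ.
by apply/has_patP; exists (m + i), (m + j), (m + k), (m + l).
Qed.

Definition order_invariant (R : nat -> nat -> nat -> nat -> bool) :=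
  forall f a b c d, {in [:: a; b; c; d] &, {mono f : x y / x < y}} ->
  R (f a) (f b) (f c) (f d) = R a b c d.

Lemma occurs_map R f s i j k l : order_invariant R -> {in s &, {mono f : x y / x < y}} ->
  occurs R (map f s) i j k l = occurs R s i j k l.
Proof.
move=> Rinv fmono; rewrite /occurs size_map.
case: (boolP [&& i < j, j < k, k < l & l < size s]) => [/and4P[ij jk kl ls] | nlt]; last first.
  by apply/and5P/and5P => -[ij jk kl ls _]; case/negP: nlt; rewrite ij jk kl ls.
have lts p : p \in [:: i; j; k; l] -> p < size s by rewrite !inE => /or4P[] /eqP->; lia.
rewrite ij jk kl ls !(nth_map 0) ?lts ?inE ?eqxx ?orbT //= Rinv //.
by apply: sub_in2 fmono => x; rewrite !inE => /or4P[] /eqP->; rewrite mem_nth ?lts ?inE ?eqxx ?orbT.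
Qed.

Lemma has_pat_map R f s : order_invariant R -> {in s &, {mono f : x y / x < y}} ->
  has_pat R (map f s) = has_pat R s.
Proof.
by move=> Rinv fmono; apply/has_patP/has_patP => -[i [j [k [l]]]];
  rewrite ?occurs_map // => occ; exists i, j, k, l; rewrite ?occurs_map.
Qed.

(** * Splittings *)

(* The flag [up] selects direct sums ([true]) or skew sums ([false]). *)
Definition ltd (up : bool) (x y : nat) := if up then x < y else y < x.

Lemma ltd_asym up x y : ltd up x y -> ltd (~~ up) x y = false.
Proof. by case: up => /=; rewrite /ltd /=; lia. Qed.

Lemma ltd_trans up y x z : ltd up x y -> ltd up y z -> ltd up x z.
Proof. by case: up; rewrite /ltd; lia. Qed.

Lemma ltd_total up x y : x != y -> ~~ ltd up x y -> ltd up y x.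
Proof. by case: up; rewrite /ltd; lia. Qed.

Lemma ltd_mono up f x y : {mono f : x y / x < y} -> ltd up (f x) (f y) = ltd up x y.
Proof. by move=> fmono; case: up; rewrite /ltd fmono. Qed.

Definition splits up (s : seq nat) k := allrel (ltd up) (take k s) (drop k s).

Definition decomposable up (s : seq nat) := has (splits up s) (iota 1 (size s).-1).

Lemma splitsP up s k :
  reflect (forall i j, i < k <= j -> j < size s -> ltd up (nth 0 s i) (nth 0 s j))
          (splits up s k).
Proof.
apply: (iffP allrelP) => [H i j /andP[ik kj] js | H _ _ /(nthP 0)[i ilt <-] /(nthP 0)[j jlt <-]].
  have ks : k < size s := leq_ltn_trans kj js.
  have xi : nth 0 (take k s) i \in take k s.
    by apply: mem_nth; rewrite size_take_min leq_min ik (ltn_trans ik ks).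
  have yj : nth 0 (drop k s) (j - k) \in drop k s.
    by apply: mem_nth; rewrite size_drop ltn_sub2r.
  by move: (H _ _ xi yj); rewrite nth_take // nth_drop subnKC.
move: ilt jlt; rewrite size_take_min size_drop leq_min => /andP[ik _] jlt.
by rewrite nth_take // nth_drop; apply: H; rewrite ?ik ?leq_addr // -ltn_subRL.
Qed.

Lemma mem_iota1 t n : (t \in iota 1 n.-1) = (0 < t < n).
Proof. by rewrite mem_iota; lia. Qed.

Lemma decomposableP up s :
  reflect (exists2 k, 0 < k < size s & splits up s k) (decomposable up s).
Proof. by apply: (iffP hasP) => -[k kr sk]; exists k; rewrite // ?mem_iota1 in kr *. Qed.

Lemma splits0 up s : splits up s 0.
Proof. by rewrite /splits take0. Qed.

Lemma splits_shift up c s k : splits up (shift c s) k = splits up s k.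
Proof.
rewrite /splits /shift -map_take -map_drop allrel_mapl allrel_mapr.
by apply: eq_allrel => x y; apply: ltd_mono; apply: ltn_add2l.
Qed.

Lemma splits_catl up xs ys t : allrel (ltd up) xs ys -> t < size xs ->
  splits up (xs ++ ys) t = splits up xs t.
Proof.
move=> /allrelP ltd_xy txs; rewrite /splits takel_cat 1?ltnW // drop_cat txs allrel_catr.
rewrite [allrel _ (take _ _) ys](_ : _ = true) ?andbT //.
by apply/allrelP => x y /mem_take; apply: ltd_xy.
Qed.

Lemma splits_catr up xs ys t : allrel (ltd up) xs ys ->
  splits up (xs ++ ys) (size xs + t) = splits up ys t.
Proof.
move=> /allrelP ltd_xy; rewrite /splits takeD take_size_cat // addnC -drop_drop.
rewrite drop_size_cat // allrel_catl [allrel _ xs _](_ : _ = true) //.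
by apply/allrelP => x y xin /mem_drop; apply: ltd_xy.
Qed.

(* No occurrence of [R] is a direct (skew) sum of two nonempty blocks. *)
Definition pattern_indec up (R : nat -> nat -> nat -> nat -> bool) :=
  forall a b c d, R a b c d -> ~~ [||
    [&& ltd up a b, ltd up a c & ltd up a d],
    [&& ltd up a c, ltd up a d, ltd up b c & ltd up b d] |
    [&& ltd up a d, ltd up b d & ltd up c d]].

Lemma has_pat_split up R s k : pattern_indec up R -> splits up s k ->
  has_pat R s = has_pat R (take k s) || has_pat R (drop k s).
Proof.
move=> Rindec /splitsP ltdS; apply/idP/orP => [|[/has_pat_take | /has_pat_drop] //].
case/has_patP=> i [j [k' [l occ]]].
case: (ltnP l k) => [lk | kl].
  by left; apply/has_patP; exists i, j, k', l; rewrite occurs_take.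
case: (leqP k i) => [ki | ik].
  right; apply/has_patP; exists (i - k), (j - k), (k' - k), (l - k).
  have /and5P[ij jk' k'l _ _] := occ.
  by rewrite occurs_drop !subnKC //; lia.
exfalso; move: occ => /and5P[ij jk' k'l ls /Rindec].
case: (leqP k j) => [kj | jk]; first by
  rewrite (ltdS i j) ?(ltdS i k') ?(ltdS i l) //=; lia.
case: (leqP k k') => [kk' | k'k]; first by
  rewrite (ltdS i k') ?(ltdS i l) ?(ltdS j k') ?(ltdS j l) //= ?orbT; lia.
by rewrite (ltdS i l) ?(ltdS j l) ?(ltdS k' l) //= ?orbT; lia.
Qed.

(** * Separable sequences *)

(* The conjuncts are ordered so that both relations are instances of the
   [ltd] form of [separable_no_ltd3142], up to conversion. *)
Definition R2413 (a b c d : nat) := [&& d < b, a < d & c < a].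

Definition R3142 (a b c d : nat) := [&& b < d, d < a & a < c].

Definition separable_seq s := ~~ has_pat R2413 s && ~~ has_pat R3142 s.

Lemma order_invariant2413 : order_invariant R2413.
Proof. by move=> f a b c d fmono; rewrite /R2413 !fmono ?inE ?eqxx ?orbT. Qed.

Lemma order_invariant3142 : order_invariant R3142.
Proof. by move=> f a b c d fmono; rewrite /R3142 !fmono ?inE ?eqxx ?orbT. Qed.

Lemma pattern_indec2413 up : pattern_indec up R2413.
Proof. by case: up => a b c d; rewrite /R2413 /ltd; lia. Qed.

Lemma pattern_indec3142 up : pattern_indec up R3142.
Proof. by case: up => a b c d; rewrite /R3142 /ltd; lia. Qed.

Lemma separable_take s k : separable_seq s -> separable_seq (take k s).
Proof.
by case/andP=> no2413 no3142; apply/andP; split; apply: contra (@has_pat_take _ s k) _.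
Qed.

(** * Direct and skew sums *)

Definition psum up (A B : seq nat) :=
  if up then A ++ shift (size A) B else shift (size B) A ++ B.

Lemma size_psum up A B : size (psum up A B) = size A + size B.
Proof. by case: up; rewrite /psum size_cat !size_map. Qed.

Lemma take_psum up A B : take (size A) (psum up A B) = if up then A else shift (size B) A.
Proof. by case: up; rewrite /psum take_size_cat ?size_map. Qed.

Lemma drop_psum up A B : drop (size A) (psum up A B) = if up then shift (size A) B else B.
Proof. by case: up; rewrite /psum drop_size_cat ?size_map. Qed.

Lemma permseq_psum up A B : permseq A -> permseq B -> permseq (psum up A B).
Proof.
move=> pA pB; rewrite /permseq size_psum; case: up.
  by rewrite iotaD add0n; apply: perm_cat; last apply: permseq_shift.
rewrite addnC iotaD add0n perm_catC.
by apply: perm_cat; last apply: permseq_shift.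
Qed.

Lemma splits_psum up A B : permseq A -> permseq B -> splits up (psum up A B) (size A).
Proof.
move=> pA pB; rewrite /splits take_psum drop_psum; apply/allrelP; case: up => x y.
  by move=> /(permseq_lt pA) xA /mapP[z _ ->]; rewrite /ltd; lia.
by move=> /mapP[z _ ->] /(permseq_lt pB) yB; rewrite /ltd; lia.
Qed.

Lemma splits_psuml up A B t : permseq A -> permseq B -> t < size A ->
  splits up (psum up A B) t = splits up A t.
Proof.
move=> pA pB tA; rewrite -[psum _ _ _](cat_take_drop (size A)) splits_catl.
- by rewrite take_psum; case: up; rewrite ?splits_shift.
- exact: splits_psum.
by rewrite size_takel // size_psum leq_addr.
Qed.

Lemma splits_psumr up A B t : permseq A -> permseq B ->
  splits up (psum up A B) (size A + t) = splits up B t.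
Proof.
move=> pA pB; have := splits_catr t (splits_psum up pA pB).
rewrite cat_take_drop size_takel ?size_psum ?leq_addr // => ->.
by rewrite drop_psum; case: up; rewrite ?splits_shift.
Qed.

Lemma indec_psum up A B : permseq A -> permseq B -> 0 < size A -> 0 < size B ->
  ~~ decomposable up (psum (~~ up) A B).
Proof.
move=> pA pB A0 B0; apply/negP => /decomposableP[t /andP[t0 tn] /splitsP st].
move/splitsP: (splits_psum (~~ up) pA pB); rewrite size_psum in tn st * => sA.
have lastN : (size A + size B).-1 < size A + size B by lia.
have ht : 0 < t <= (size A + size B).-1 by lia.
have hA : 0 < size A <= (size A + size B).-1 by lia.
by move: (sA _ _ hA lastN); rewrite (ltd_asym (st _ _ ht lastN)).
Qed.

Lemma has_pat_psum up R A B : pattern_indec up R -> order_invariant R ->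
  permseq A -> permseq B -> has_pat R (psum up A B) = has_pat R A || has_pat R B.
Proof.
move=> Rindec Rinv pA pB; rewrite (has_pat_split Rindec (splits_psum up pA pB)).
rewrite take_psum drop_psum; case: up Rindec => _; rewrite ?has_pat_map //.
all: by apply: in2W; apply: ltn_add2l.
Qed.

Lemma separable_psum up A B : permseq A -> permseq B ->
  separable_seq (psum up A B) = separable_seq A && separable_seq B.
Proof.
move=> pA pB; rewrite /separable_seq.
rewrite (has_pat_psum (pattern_indec2413 up) order_invariant2413 pA pB).
rewrite (has_pat_psum (pattern_indec3142 up) order_invariant3142 pA pB).
by case: (has_pat R2413 A); case: (has_pat R3142 A); rewrite //= ?andbF.
Qed.

Lemma std_take_psum up A B : permseq A -> std (take (size A) (psum up A B)) = A.
Proof. by move=> pA; rewrite take_psum; case: up; rewrite ?std_shift ?std_permseq. Qed.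

Lemma std_drop_psum up A B : permseq B -> std (drop (size A) (psum up A B)) = B.
Proof. by move=> pB; rewrite drop_psum; case: up; rewrite ?std_shift ?std_permseq. Qed.

Lemma rank_eq0 x t : {in t, forall y, x < y} -> rank t x = 0.
Proof.
by move=> lt_x; apply/eqP; rewrite -leqn0 leqNgt -has_count; apply/hasPn => y /lt_x /=; lia.
Qed.

Lemma rank_eq_size x t : {in t, forall y, y < x} -> rank t x = size t.
Proof. by move=> gt_x; apply/eqP; rewrite -all_count; apply/allP. Qed.

Lemma psum_std up s k : permseq s -> splits up s k ->
  psum up (std (take k s)) (std (drop k s)) = s.
Proof.
move=> ps /allrelP ltdS; rewrite /psum !size_std -[RHS](cat_take_drop k s).
have rank_cat x : x \in s -> rank (take k s) x + rank (drop k s) x = x.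
  move=> xs; rewrite /rank -count_cat cat_take_drop.
  by apply: rank_permseq => //; apply/ltnW/permseq_lt.
case: up ltdS => /= ltdS; congr (_ ++ _); rewrite ?/shift /std -?map_comp;
  apply: map_id_in => x xt /=.
- rewrite -[RHS](rank_cat x (mem_take xt)) [rank (drop _ _) _]rank_eq0 ?addn0 // => y.
  exact: ltdS.
- rewrite -[RHS](rank_cat x (mem_drop xt)) [rank (take _ _) _]rank_eq_size // => y yt.
  exact: ltdS.
- rewrite -[RHS](rank_cat x (mem_take xt)) addnC [rank (drop _ _) _]rank_eq_size // => y.
  exact: ltdS.
- rewrite -[RHS](rank_cat x (mem_drop xt)) [rank (take _ _) _]rank_eq0 // => y yt.
  exact: ltdS.
Qed.

(** * Separable permutations are decomposable *)

Lemma separable_no_ltd3142 up s : separable_seq s ->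
  ~~ has_pat (fun a b c d => [&& ltd up b d, ltd up d a & ltd up a c]) s.
Proof. by case: up; case/andP. Qed.

Lemma splits_rcons up s v k : splits up s k -> k <= size s ->
  all (ltd up ^~ v) (take k s) -> splits up (rcons s v) k.
Proof.
move=> sk ks ltv; rewrite /splits drop_rcons // -!cats1 takel_cat // allrel_catr allrel1r.
exact/andP.
Qed.

Lemma splits_last up s v : all (ltd up v) s -> splits (~~ up) (rcons s v) (size s).
Proof.
move=> ltv; rewrite /splits -cats1 take_size_cat // drop_size_cat // allrel1r.
by apply: sub_all ltv => x; case: up; rewrite /ltd.
Qed.

Lemma splits_threshold up s v k a : splits up s k -> a < k ->
  (forall p, p < a -> ltd up (nth 0 s p) v) ->
  (forall p, a <= p < k -> ltd up v (nth 0 s p)) -> splits up s a.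
Proof.
move=> /splitsP ltdS ak below above; apply/splitsP => i p /andP[ia ap] ps.
case: (ltnP p k) => [pk | kp]; first by apply: ltd_trans (below i ia) (above p _); rewrite ap.
by apply: ltdS => //; rewrite kp (ltn_trans ia).
Qed.

(* An entry below [v] after position [a] would form, with [s_a], [s_k] and
   [v], the pattern 3142 (2413 when [up = false]). *)
Lemma first_block_above up s v k a : v \notin s -> separable_seq (rcons s v) ->
  splits up s k -> k < size s -> ltd up v (nth 0 s a) ->
  forall p, a <= p < k -> ltd up v (nth 0 s p).
Proof.
move=> vs sep /splitsP sk ks va p; rewrite leq_eqVlt => /andP[/predU1P[<- // | ap] pk].
apply: ltd_total; first by apply: contraNneq vs => <-; rewrite mem_nth // (ltn_trans pk).
apply/negP => pv; case/negP: (separable_no_ltd3142 up sep); apply/has_patP.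
exists a, p, k, (size s); have pS := ltn_trans pk ks; have aS := ltn_trans ap pS.
rewrite /occurs size_rcons !nth_rcons ltnn eqxx ap pk ks aS pS pv va /=.
by rewrite ltnSn sk // (ltn_trans ap pk) leqnn.
Qed.

(* Let [k] be the least split of [s]. Either [v] lies above the first block or
   below all of [s], and [rcons s v] splits; or the first position [a] of the
   first block whose entry lies above [v] is a smaller split of [s]. *)
Lemma decomposable_rcons up s v : uniq (rcons s v) -> separable_seq (rcons s v) ->
  decomposable up s -> decomposable up (rcons s v) || decomposable (~~ up) (rcons s v).
Proof.
rewrite rcons_uniq => /andP[vs _] sep /decomposableP[k1 k1s sk1].
have [|k /andP[/andP[k0 ks] sk] kmin] :=
  ex_minnP (_ : exists k, (0 < k < size s) && splits up s k); first by exists k1; rewrite k1s.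
have nth_neq p : p < size s -> v != nth 0 s p.
  by move=> ps; apply: contraNneq vs => ->; apply: mem_nth.
case: (boolP (all (ltd up ^~ v) (take k s))) => [below | /allPn[_ /(nthP 0)[i + <-]]].
  apply/orP; left; apply/decomposableP; exists k; last exact: splits_rcons (ltnW ks) below.
  by rewrite size_rcons k0 ltnW.
rewrite size_take ks => ik not_below.
case: (boolP (all (ltd up v) s)) => [above | /allPn[_ /(nthP 0)[j js <-] not_above]].
  apply/orP; right; apply/decomposableP; exists (size s); last exact: splits_last.
  by rewrite size_rcons ltnSn (leq_trans k0 (ltnW ks)).
have [|a /andP[ak va] amin] := ex_minnP (_ : exists a, (a < k) && ltd up v (nth 0 s a)).
  exists i; rewrite ik; apply: ltd_total; last by rewrite -(nth_take 0 ik).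
  by rewrite eq_sym nth_neq // (ltn_trans ik).
have below p : p < a -> ltd up (nth 0 s p) v.
  move=> pa; apply: ltd_total (nth_neq p _) _; first by rewrite (ltn_trans pa) // (ltn_trans ak).
  by apply/negP => vp; have := amin p; rewrite (ltn_trans pa ak) vp leqNgt pa => /(_ isT).
have above := first_block_above vs sep sk ks va.
have ja : j < a.
  rewrite ltnNge; apply: contra not_above => aj; case: (ltnP j k) => [jk | kj].
    by rewrite above ?aj.
  by apply: ltd_trans va _; move/splitsP: sk => ->; rewrite ?ak.
have := kmin a; rewrite (leq_ltn_trans (leq0n j) ja) (ltn_trans ak ks).
by rewrite (splits_threshold sk ak below above) leqNgt ak => /(_ isT).
Qed.

Theorem separable_decomposable s : uniq s -> separable_seq s -> 1 < size s ->
  decomposable true s || decomposable false s.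
Proof.
elim/last_ind: s => [|s v IHs] // us sep; rewrite size_rcons ltnS leq_eqVlt.
case/predU1P => [s1 | s2].
  case: s s1 us {sep IHs} => [|x []] //= _; rewrite /decomposable /splits /= /ltd.
  by rewrite !allrel1l /= inE !andbT !orbF; case: (ltngtP x v).
have us' : uniq s by move: us; rewrite rcons_uniq => /andP[].
have seps : separable_seq s by move: (separable_take (size s) sep); rewrite -cats1 take_size_cat.
by case/orP: (IHs us' seps s2) => /(decomposable_rcons us sep); rewrite // orbC.
Qed.

Lemma decomposable_indec up s : permseq s -> separable_seq s -> 1 < size s ->
  ~~ decomposable up s -> decomposable (~~ up) s.
Proof.
move=> ps sep s2; have := separable_decomposable (permseq_uniq ps) sep s2.
by case: up => /orP[] ->.
Qed.

(** * Counting by decomposition *)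

Definition perms n := permutations (iota 0 n).

Lemma mem_perms n s : (s \in perms n) = permseq s && (size s == n).
Proof.
rewrite mem_permutations; apply/idP/andP => [ps | [ps /eqP <-] //].
by have := perm_size ps; rewrite size_iota => sn; rewrite /permseq sn.
Qed.

Lemma perms_splits up n k : k <= n ->
  perm_eq [seq s <- perms n | splits up s k]
          [seq psum up A B | A <- perms k, B <- perms (n - k)].
Proof.
move=> kn; apply: uniq_perm; first exact/filter_uniq/permutations_uniq.
  apply: allpairs_uniq; try exact: permutations_uniq.
  move=> [A B] [A' B'] /allpairsPdep[A1 [B1 [A1k B1k [-> ->]]]].
  move=> /allpairsPdep[A2 [B2 [A2k B2k [-> ->]]]] /= e.
  move: A1k A2k; rewrite !mem_perms => /andP[pA1 /eqP sA1] /andP[pA2 /eqP sA2].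
  move: B1k B2k; rewrite !mem_perms => /andP[pB1 _] /andP[pB2 _].
  have eA := std_take_psum up B1 pA1; have eB := std_drop_psum up A1 pB1.
  rewrite e sA1 -sA2 in eA eB.
  by rewrite -eA -eB std_take_psum ?std_drop_psum.
move=> s; rewrite mem_filter mem_perms.
apply/andP/allpairsP => [[sk /andP[ps /eqP sn]] | [[A B] []]].
  exists (std (take k s), std (drop k s)); rewrite /= psum_std //; split=> //.
    by rewrite mem_perms permseq_std ?take_uniq ?permseq_uniq // size_std size_takel ?eqxx ?sn.
  by rewrite mem_perms permseq_std ?drop_uniq ?permseq_uniq // size_std size_drop sn eqxx.
rewrite !mem_perms /= => /andP[pA /eqP sA] /andP[pB /eqP sB] ->.
by rewrite permseq_psum // size_psum sA sB subnKC // eqxx -sA splits_psum.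
Qed.

Lemma count_allpairs (S T : eqType) U (f : S -> T -> U) (P : pred U) PX PY X Y :
  {in X & Y, forall x y, P (f x y) = PX x && PY y} ->
  count P [seq f x y | x <- X, y <- Y] = count PX X * count PY Y.
Proof.
elim: X => [|x X IHX] fP //=; rewrite count_cat count_map IHX => [|x' y x'X yY]; last first.
  by apply: fP; rewrite ?inE ?x'X ?orbT.
rewrite mulnDl; congr (_ + _).
rewrite (@eq_in_count _ _ (fun y => PX x && PY y)) => [|y yY]; last first.
  by apply: fP; rewrite ?inE ?eqxx.
by case: (PX x); rewrite ?mul1n ?mul0n ?count_pred0.
Qed.

Lemma count_psum up n k (P PA PB : pred (seq nat)) : k <= n ->
  {in perms n, forall s, P s -> splits up s k} ->
  {in perms k & perms (n - k), forall A B, P (psum up A B) = PA A && PB B} ->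
  count P (perms n) = count PA (perms k) * count PB (perms (n - k)).
Proof.
move=> kn Psplits Ppsum; rewrite -(count_allpairs Ppsum) -(seq.permP (perms_splits up kn)).
rewrite count_filter; apply: eq_in_count => s sn /=.
by apply/idP/andP => [Ps | []//]; rewrite Psplits.
Qed.

Lemma count_partition (T : eqType) (P : pred T) (key : T -> nat) m s :
  {in s, forall x, P x -> key x < m} ->
  count P s = \sum_(b < m) count (fun x => P x && (key x == b)) s.
Proof.
elim: s => [|x s IHs] keyP; first by rewrite big1.
rewrite /= big_split /= -IHs => [|y ys]; last by apply: keyP; rewrite inE ys orbT.
congr (_ + _); case: (boolP (P x)) => Px /=; last by rewrite big1.
rewrite (bigD1 (Ordinal (keyP x (mem_head x s) Px))) //= eqxx big1 // => b.
by rewrite -val_eqE /= eq_sym => /negbTE->.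
Qed.

Lemma count_pred0_in (T : eqType) (P : pred T) s : {in s, forall x, ~~ P x} -> count P s = 0.
Proof. by move=> nP; apply/eqP; rewrite -leqn0 leqNgt -has_count; apply/hasPn. Qed.

Definition first_split up s := (find (splits up s) (iota 1 (size s).-1)).+1.

Lemma first_splitP up s : decomposable up s ->
  [/\ 0 < first_split up s < size s, splits up s (first_split up s)
    & forall t, 0 < t < first_split up s -> ~~ splits up s t].
Proof.
move=> dec; have := dec; rewrite /decomposable has_find size_iota => fs.
have := nth_find 0 dec; rewrite nth_iota // add1n => sf.
split=> //; first by rewrite /first_split; lia.
move=> [//|t] /andP[_ tf]; rewrite /first_split ltnS in tf.
have := @before_find _ 0 (splits up s) (iota 1 (size s).-1) t tf.
by rewrite nth_iota ?add1n ?(ltn_trans tf fs) // => ->.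
Qed.

Lemma first_split_psum up A B : permseq A -> permseq B -> 0 < size A -> 0 < size B ->
  (first_split up (psum up A B) == size A) = ~~ decomposable up A.
Proof.
move=> pA pB A0 B0.
have : decomposable up (psum up A B).
  by apply/decomposableP; exists (size A); rewrite ?splits_psum // size_psum A0 -addn1 leq_add2l.
case/first_splitP; set f := first_split _ _ => /andP[f0 fn] sf fmin.
apply/eqP/idP => [fA | Aindec].
  apply/negP => /decomposableP[t /andP[t0 tA] st].
  by move: (fmin t); rewrite t0 fA tA splits_psuml // st => /(_ isT).
case: (ltngtP f (size A)) => [fA | Af | //].
  by case/negP: Aindec; apply/decomposableP; exists f; rewrite ?f0 // -(splits_psuml _ pA pB fA).
by move: (fmin (size A)); rewrite A0 Af splits_psum // => /(_ isT).
Qed.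

Definition last_split up s := \max_(k < size s | splits up s k) k.

Lemma last_splitP up s : 0 < size s ->
  [/\ last_split up s < size s, splits up s (last_split up s)
    & forall t, t < size s -> splits up s t -> t <= last_split up s].
Proof.
case: s => [//|x s] _; rewrite /last_split (bigmax_eq_arg ord0) ?splits0 //.
case: arg_maxnP => [|/= k sk kmax]; first exact: splits0.
split=> // t ts st; exact: (kmax (Ordinal ts)).
Qed.

Lemma last_split_psum up A B : permseq A -> permseq B -> 0 < size B ->
  (last_split up (psum up A B) == size A) = ~~ decomposable up B.
Proof.
move=> pA pB B0; have [] := @last_splitP up (psum up A B).
  by rewrite size_psum addn_gt0 B0 orbT.
set m := last_split _ _; rewrite size_psum => mn sm mmax.
apply/eqP/idP => [mA | Bindec].
  apply/negP => /decomposableP[t /andP[t0 tB] st].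
  have := mmax (size A + t); rewrite ltn_add2l tB splits_psumr // st mA => /(_ isT isT).
  by rewrite -[X in _ <= X]addn0 leq_add2l leqNgt t0.
have Am : size A <= m by apply: mmax; rewrite ?splits_psum // -[X in X < _]addn0 ltn_add2l.
apply/eqP; rewrite eqn_leq Am andbT leqNgt; apply/negP => Am'.
case/negP: Bindec; apply/decomposableP; exists (m - size A); first by lia.
by rewrite -(splits_psumr up _ pA pB) subnKC.
Qed.

Lemma last_split_indec s : permseq s -> 0 < last_split false s -> ~~ decomposable true s.
Proof.
move=> ps m0; have s0 : 0 < size s by case: s ps m0 => [|//]; rewrite /last_split big_ord0.
have [ms sm _] := last_splitP false s0.
rewrite -(psum_std ps sm); apply: (@indec_psum true).
- by apply: permseq_std; rewrite take_uniq ?permseq_uniq.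
- by apply: permseq_std; rewrite drop_uniq ?permseq_uniq.
- by rewrite size_std size_takel // ltnW.
by rewrite size_std size_drop subn_gt0.
Qed.

(* The entry 1 of the paper is encoded as 0, and [l] is a 1-based position. *)
Definition zero_at l (s : seq nat) := (0 \in s) && ((index 0 s).+1 == l).

Lemma zero_at_size l s : zero_at l s -> 0 < l <= size s.
Proof. by case/andP; rewrite -index_mem => s0 /eqP<-. Qed.

Lemma zero_at_psum_sum l A B : permseq A -> 0 < size A ->
  zero_at l (psum true A B) = zero_at l A.
Proof.
by move=> pA A0; rewrite /zero_at /psum mem_cat index_cat permseq_mem0.
Qed.

Lemma zero_at_psum_skew l A B : permseq A -> permseq B -> size A < l ->
  zero_at l (psum false A B) = zero_at (l - size A) B.
Proof.
move=> pA pB Al; case: (posnP (size B)) => [/size0nil-> | B0].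
  rewrite /psum /shift (eq_map add0n) map_id cats0 /zero_at in_nil andFb.
  case: (boolP (0 \in A)) => //= A0; rewrite -index_mem in A0.
  by rewrite ltn_eqF // (leq_ltn_trans A0).
have nA : 0 \notin shift (size B) A by apply/mapP => -[x _]; lia.
rewrite /zero_at /psum mem_cat index_cat (negbTE nA) permseq_mem0 // size_map.
by apply/eqP/eqP; lia.
Qed.

Lemma last_split_zero l s : zero_at l s -> last_split false s < l.
Proof.
move=> zs; have /andP[l0 ls] := zero_at_size zs.
have [mn /splitsP sm _] := last_splitP false (leq_trans l0 ls).
case/andP: zs => s0 /eqP <-; rewrite ltnS leqNgt; apply/negP => im.
by have := sm _ _ (_ : index 0 s < _ <= _) mn; rewrite im leqnn nth_index // => /(_ isT).
Qed.

Definition nsep n := count separable_seq (perms n).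

Definition nsep_at n l := count (fun s => separable_seq s && zero_at l s) (perms n).

Definition nindec_at up n l :=
  count (fun s => [&& separable_seq s, ~~ decomposable up s & zero_at l s]) (perms n).

Lemma nsep_at_out n l : ~~ (0 < l <= n) -> nsep_at n l = 0.
Proof.
move=> nl; apply: count_pred0_in => s; rewrite mem_perms => /andP[_ /eqP sn].
by apply/negP => /andP[_ /zero_at_size]; rewrite sn; apply/negP.
Qed.

Lemma nindec_at0 up n : nindec_at up n 0 = 0.
Proof. by apply: count_pred0_in => s _; apply/negP => /and3P[_ _ /zero_at_size]. Qed.

Lemma count_last_skew n l b : b <= n -> b < l ->
  count (fun s => [&& separable_seq s, zero_at l s & last_split false s == b]) (perms n)
  = nsep b * nindec_at false (n - b) (l - b).
Proof.
move=> bn bl; apply: (@count_psum false) => // [s _ /and3P[_ zs /eqP <-] | A B].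
  by have /andP[l0 ls] := zero_at_size zs; have [] := last_splitP false (leq_trans l0 ls).
rewrite !mem_perms => /andP[pA /eqP sA] /andP[pB /eqP sB].
rewrite separable_psum // zero_at_psum_skew ?sA //.
case: (posnP (size B)) => [/size0nil-> | B0]; first by rewrite /zero_at !andbF.
by rewrite -sA last_split_psum // -andbA [zero_at _ _ && _]andbC.
Qed.

Lemma nsep_atE n l : nsep_at n l =
  \sum_(b < n.+1) if b < l then nsep b * nindec_at false (n - b) (l - b) else 0.
Proof.
rewrite /nsep_at (@count_partition _ _ (last_split false) n.+1) => [|s sn /andP[_ zs]].
  apply: eq_bigr => b _; case: ifP => bl.
    rewrite -(count_last_skew (_ : b <= n) bl); last by rewrite -ltnS.
    by apply: eq_count => s; rewrite /= andbA.
  apply: count_pred0_in => s _; apply/negP => /andP[/andP[_ /last_split_zero]].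
  by move=> lt /eqP eb; rewrite -eb lt in bl.
move: sn; rewrite mem_perms => /andP[_ /eqP <-].
have /andP[l0 ls] := zero_at_size zs.
by have [+ _ _] := last_splitP false (leq_trans l0 ls); apply: ltnW.
Qed.

Lemma nindec_at_skewE n l : nindec_at false n l =
  ((n == 1) && (l == 1)) + \sum_(k < n) nindec_at true k l * nsep (n - k).
Proof.
case: n => [|[|n]]; first by rewrite big_ord0.
  by rewrite big_ord1 /nindec_at /perms /= /zero_at /= eq_sym.
rewrite /nindec_at (@count_partition _ _ (first_split true) n.+2) => [|s sn /and3P[sep ind _]];
  last first.
  move: sn; rewrite mem_perms => /andP[ps /eqP sn]; have s2 : 1 < size s by rewrite sn.
  by have [/andP[_ +] _ _] := first_splitP (decomposable_indec ps sep s2 ind); rewrite sn.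
rewrite add0n; apply: eq_bigr => -[[|k] /= kn] _.
  by rewrite /perms /= /zero_at /=; apply: count_pred0_in => s _; rewrite andbF.
apply: (@count_psum true) => [|s sn /andP[/and3P[sep ind _] /eqP <-] | A B]; first exact: ltnW.
  move: sn; rewrite mem_perms => /andP[ps /eqP sn]; have s2 : 1 < size s by rewrite sn.
  by have [] := first_splitP (decomposable_indec ps sep s2 ind).
rewrite !mem_perms => /andP[pA /eqP sA] /andP[pB /eqP sB].
have A0 : 0 < size A by rewrite sA.
have B0 : 0 < size B by rewrite sB subn_gt0.
rewrite separable_psum // zero_at_psum_sum // -sA first_split_psum //.
rewrite (indec_psum false pA pB A0 B0).
by case: (separable_seq A); case: (separable_seq B); case: (decomposable true A);
  rewrite //= ?andbF.
Qed.

Lemma nindec_at_sumE n l : nindec_at true n l = ((n == 1) && (l == 1)) +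
  \sum_(b < n.+1) if 0 < b < l then nsep b * nindec_at false (n - b) (l - b) else 0.
Proof.
case: n => [|[|n]]; first by rewrite big_ord1.
  by rewrite 2!big_ord_recl big_ord0 /= /nindec_at /perms /= /zero_at /= muln0 if_same eq_sym.
rewrite /nindec_at (@count_partition _ _ (last_split false) n.+3) => [|s sn /and3P[_ _ zs]];
  last first.
  move: sn; rewrite mem_perms => /andP[_ /eqP <-]; have /andP[l0 ls] := zero_at_size zs.
  by have [+ _ _] := last_splitP false (leq_trans l0 ls); apply: ltnW.
rewrite add0n; apply: eq_bigr => -[[|b] /= bn] _.
  apply: count_pred0_in => s; rewrite mem_perms => /andP[ps /eqP sn].
  apply/negP => /andP[/and3P[sep ind _]].
  have s2 : 1 < size s by rewrite sn.
  have /decomposableP[t /andP[t0 ts] st] := decomposable_indec ps sep s2 ind.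
  have [_ _ /(_ t ts st)] := last_splitP false (ltn_trans t0 ts).
  by move=> tm /eqP m0; rewrite m0 leqNgt t0 in tm.
case: ifP => bl.
  rewrite -(count_last_skew (_ : b.+1 <= n.+2) bl); last by [].
  apply: eq_in_count => s; rewrite mem_perms => /andP[ps _] /=.
  case: eqP => [mb | _]; last by rewrite !andbF.
  by rewrite last_split_indec ?mb // !andbT.
apply: count_pred0_in => s _; apply/negP => /andP[/and3P[_ _ /last_split_zero]].
by move=> lt /eqP eb; move: bl; rewrite -eb lt.
Qed.

(** * Permutations of 'I_n *)

Definition quad (a b c d : nat) (x : 'I_4) := nth 0 [:: a; b; c; d] x.

Lemma quad_ord (g : 'I_4 -> nat) x :
  quad (g (inord 0)) (g (inord 1)) (g (inord 2)) (g (inord 3)) x = g x.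
Proof.
by case: x => [[|[|[|[|//]]]] x4]; rewrite /quad /=; congr g; apply: val_inj; rewrite /= inordK.
Qed.

Lemma quad_map (g : nat -> nat) a b c d x : quad (g a) (g b) (g c) (g d) x = g (quad a b c d x).
Proof. by case: x => [[|[|[|[|//]]]] x4]. Qed.

Definition iso4 (p : seq nat) a b c d :=
  [forall x : 'I_4, forall y : 'I_4, (quad a b c d x < quad a b c d y) == (nth 0 p x < nth 0 p y)].

Lemma iso4_2413 a b c d : iso4 [:: 2; 4; 1; 3] a b c d = R2413 a b c d.
Proof.
apply/forallP/idP => [H | R x]; last first.
  apply/forallP => y; move: R; rewrite /R2413.
  case: x y => [[|[|[|[|//]]]] ?] [[|[|[|[|//]]]] ?]; rewrite /quad /=; apply/implyP; lia.
have E x y := forallP (H x) y.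
move: (E (inord 3) (inord 1)) (E (inord 0) (inord 3)) (E (inord 2) (inord 0)).
by rewrite /quad /R2413 !inordK //=; lia.
Qed.

Lemma iso4_3142 a b c d : iso4 [:: 3; 1; 4; 2] a b c d = R3142 a b c d.
Proof.
apply/forallP/idP => [H | R x]; last first.
  apply/forallP => y; move: R; rewrite /R3142.
  case: x y => [[|[|[|[|//]]]] ?] [[|[|[|[|//]]]] ?]; rewrite /quad /=; apply/implyP; lia.
have E x y := forallP (H x) y.
move: (E (inord 1) (inord 3)) (E (inord 3) (inord 0)) (E (inord 0) (inord 2)).
by rewrite /quad /R3142 !inordK //=; lia.
Qed.

Definition oneline n (s : 'S_n) : seq nat := [seq val (s i) | i <- enum 'I_n].

Lemma size_oneline n (s : 'S_n) : size (oneline s) = n.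
Proof. by rewrite size_map size_enum_ord. Qed.

Lemma nth_oneline n (s : 'S_n) (i : 'I_n) : nth 0 (oneline s) i = s i.
Proof. by rewrite (nth_map i) ?size_enum_ord // nth_ord_enum. Qed.

Lemma oneline_inj n : injective (@oneline n).
Proof. by move=> s t e; apply/permP => i; apply: val_inj; rewrite /= -!nth_oneline e. Qed.

Lemma permseq_oneline n (s : 'S_n) : permseq (oneline s).
Proof.
rewrite permseqE size_oneline; apply/andP; split.
  by rewrite /oneline map_inj_uniq ?enum_uniq // => i j /val_inj; apply: perm_inj.
by apply/allP => _ /mapP[i _ ->]; apply: ltn_ord.
Qed.

Lemma oneline_surj n t : permseq t -> size t = n -> exists s : 'S_n, oneline s = t.
Proof.
move=> pt tn; pose f i := insubd i (nth 0 t (val i)) : 'I_n.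
have fE i : val (f i) = nth 0 t i.
  have it : val i < size t by rewrite tn ltn_ord.
  by have := permseq_lt pt (mem_nth 0 it); rewrite tn val_insubd => ->.
have finj : injective f.
  move=> i j /(congr1 val); rewrite !fE => /eqP; rewrite nth_uniq ?permseq_uniq ?tn //.
  by move/eqP; apply: val_inj.
exists (perm finj); apply: (@eq_from_nth _ 0); rewrite size_oneline ?tn // => i ilt.
by rewrite (nth_oneline _ (Ordinal ilt)) permE fE.
Qed.

Lemma perms_oneline n : perm_eq [seq oneline s | s <- enum 'S_n] (perms n).
Proof.
apply: uniq_perm; first by rewrite (map_inj_uniq (@oneline_inj n)) enum_uniq.
  exact: permutations_uniq.
move=> t; rewrite mem_perms; apply/mapP/andP => [[s _ ->] | [pt /eqP /(oneline_surj pt)[s <-]]].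
  by rewrite permseq_oneline size_oneline.
by exists s; rewrite ?mem_enum.
Qed.

Lemma contains_pattern4 p n (s : 'S_n) : size p = 4 ->
  contains_pattern p s = has_pat (iso4 p) (oneline s).
Proof.
case: p => [|p0 [|p1 [|p2 [|p3 []]]]] // _; rewrite /contains_pattern /=.
apply/existsP/has_patP => [[f /forallP H] | [i [j [k [l /and5P[ij jk kl ln R]]]]]].
  have E x y := forallP (H x) y.
  exists (f (inord 0)), (f (inord 1)), (f (inord 2)), (f (inord 3)).
  rewrite /occurs size_oneline !nth_oneline ltn_ord.
  move: (E (inord 0) (inord 1)) (E (inord 1) (inord 2)) (E (inord 2) (inord 3)).
  rewrite !inordK //= => /andP[-> _] /andP[-> _] /andP[-> _] /=.
  apply/forallP => x; apply/forallP => y.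
  have qo z : quad (s (f (inord 0))) (s (f (inord 1))) (s (f (inord 2))) (s (f (inord 3))) z
    = s (f z) := quad_ord (fun x => nat_of_ord (s (f x))) z.
  by rewrite !qo; case/andP: (E x y).
rewrite size_oneline in ln; pose pos x : 'I_n := insubd (Ordinal ln) (quad i j k l x).
have posE x : val (pos x) = quad i j k l x.
  have : quad i j k l x < n by case: x => [[|[|[|[|//]]]] x4]; rewrite /quad /=; lia.
  by rewrite val_insubd => ->.
exists [ffun x => pos x]; apply/forallP => a; apply/forallP => b; rewrite !ffunE.
apply/andP; split.
  by rewrite !posE; case: a b => [[|[|[|[|//]]]] ?] [[|[|[|[|//]]]] ?]; rewrite /quad /=; lia.
move: (forallP (forallP R a) b).
by rewrite (quad_map (nth 0 (oneline s))) quad_map -!posE !nth_oneline.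
Qed.

Lemma separable_oneline n (s : 'S_n) : separable s = separable_seq (oneline s).
Proof.
rewrite /separable /avoids !contains_pattern4 //.
by rewrite (eq_has_pat _ iso4_2413) (eq_has_pat _ iso4_3142).
Qed.

Lemma zero_at_oneline n l (s : 'S_n) :
  [exists i : 'I_n, (i.+1 == l) && (val (s i) == 0)] = zero_at l (oneline s).
Proof.
have ut : uniq (oneline s) by apply/permseq_uniq/permseq_oneline.
apply/existsP/andP => [[i /andP[/eqP <- /eqP si0]] | [t0 /eqP <-]].
  have e : nth 0 (oneline s) i = 0 by rewrite nth_oneline.
  have -> : index 0 (oneline s) = i by rewrite -{1}e index_uniq ?size_oneline.
  by split=> //; apply/(nthP 0); exists i; rewrite ?size_oneline.
have it : index 0 (oneline s) < n by move: t0; rewrite -index_mem size_oneline.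
by exists (Ordinal it); rewrite eqxx /= -(nth_oneline s (Ordinal it)) nth_index.
Qed.

Lemma card_oneline n (P : pred (seq nat)) : #|[set s : 'S_n | P (oneline s)]| = count P (perms n).
Proof.
rewrite -(seq.permP (perms_oneline n)) count_map enumT cardE /enum_mem size_filter.
by apply: eq_count => s; rewrite /= inE.
Qed.

Lemma sep_countE n : sep_count n = nsep n.
Proof.
by rewrite /sep_count /nsep -card_oneline; apply: eq_card => s; rewrite !inE separable_oneline.
Qed.

Lemma sep_count_atE n l : sep_count_at n l = nsep_at n l.
Proof.
rewrite /sep_count_at /nsep_at -card_oneline; apply: eq_card => s.
by rewrite !inE separable_oneline zero_at_oneline.
Qed.

(** * Generating functions *)

Import GRing.Theory.
Local Open Scope ring_scope.

Lemma bser_mul_diag D (d : nat -> int) F n l :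
  (forall i j, D i j = if j == i then d i else 0) ->
  bser_mul D F n l = \sum_(i < n.+1) if (i <= l)%N then d i * F (n - i)%N (l - i)%N else 0.
Proof.
move=> DE; apply: eq_bigr => i _; under eq_bigr => j _ do rewrite DE.
case: leqP => [il | li]; last first.
  by rewrite big1 // => j _; rewrite ifN ?mul0r // neq_ltn (leq_trans (ltn_ord j)).
rewrite (bigD1 (Ordinal (il : (i < l.+1)%N))) //= eqxx big1 ?addr0 // => j.
by rewrite -val_eqE /= => /negbTE->; rewrite mul0r.
Qed.

Lemma bser_mul_axis F A (a : nat -> int) n l :
  (forall i j, A i j = if j == 0%N then a i else 0) ->
  bser_mul F A n l = \sum_(i < n.+1) F i l * a (n - i)%N.
Proof.
move=> AE; apply: eq_bigr => i _; under eq_bigr => j _ do rewrite AE.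
rewrite big_ord_recr /= subnn eqxx big1 ?add0r // => j _.
by rewrite ifN ?mulr0 // subn_eq0 -ltnNge.
Qed.

Definition indec_ser up : bser := fun n l => (nindec_at up n l)%:Z.

Definition one_ser : bser := fun n l => ((n == 0%N) && (l == 0%N))%:R.

Definition xu_ser : bser := fun n l => ((n == 1%N) && (l == 1%N))%:R.

Lemma gxuE n l : gxu n l = bser_mul Sxu (indec_ser false) n l.
Proof.
have -> : gxu n l = (nsep_at n l)%:Z.
  by rewrite /gxu sep_count_atE; case: ifP => // /negbT/nsep_at_out->.
rewrite (@bser_mul_diag _ (fun i => (nsep i)%:Z)) => [|i j]; last by rewrite /Sxu sep_countE.
rewrite nsep_atE -natz natr_sum; apply: eq_bigr => i _.
case: (ltngtP i l) => [il | li | ->]; rewrite ?natrM ?ltnW //; first by rewrite !natz.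
by rewrite subnn /indec_ser nindec_at0 mulr0.
Qed.

Lemma indec_ser_skewE n l :
  indec_ser false n l = bser_add xu_ser (bser_mul (indec_ser true) (bser_sub Sx one_ser)) n l.
Proof.
rewrite /bser_add (@bser_mul_axis _ _ (fun i => (nsep i)%:Z - (i == 0%N)%:R)) => [|i j]; last first.
  rewrite /bser_sub /Sx /one_ser sep_countE.
  by case: (j == 0%N); rewrite ?andbT ?andbF ?subr0 //; reflexivity.
rewrite /indec_ser nindec_at_skewE PoszD big_ord_recr /= subnn /= -/(nsep 0) subrr mulr0 addr0.
congr (_ + _); first by rewrite /xu_ser natz.
rewrite -natz natr_sum; apply: eq_bigr => i _.
by rewrite natrM !natz subn_eq0 leqNgt ltn_ord subr0.
Qed.

Lemma indec_ser_sumE n l :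
  indec_ser true n l = bser_add xu_ser (bser_mul (bser_sub Sxu one_ser) (indec_ser false)) n l.
Proof.
rewrite /bser_add (@bser_mul_diag _ (fun i => (nsep i)%:Z - (i == 0%N)%:R)) => [|i j]; last first.
  rewrite /bser_sub /Sxu /one_ser sep_countE; case: eqP => [-> | ji]; first by rewrite andbb.
  have -> : (i == 0%N) && (j == 0%N) = false.
    by apply/andP => -[/eqP i0 /eqP j0]; apply: ji; rewrite i0 j0.
  by rewrite subr0.
rewrite /indec_ser nindec_at_sumE PoszD big_ord_recl [in RHS]big_ord_recl /= subrr mul0r.
congr (_ + _); first by rewrite /xu_ser natz.
rewrite add0r -natz natr_sum; apply: eq_bigr => i _; rewrite /bump /= add1n subr0.
case: (ltngtP i.+1 l) => [il | li | <-]; rewrite ?ltnW ?natrM ?natz //.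
by rewrite subnn nindec_at0 mulr0.
Qed.

(* A series [F : bser] is handled through its truncation [trunc N F], a
   polynomial in x (outer) and u (inner) that agrees with [F] on the box
   [0, N]^2; truncation commutes with products up to polynomials that vanish
   on the box. *)
Definition coef2 (p : {poly {poly int}}) : bser := fun n l => (p`_n)`_l.

Definition trunc N (F : bser) : {poly {poly int}} := \poly_(i < N.+1) \poly_(j < N.+1) F i j.

Definition xu : {poly {poly int}} := 'X * ('X)%:P.

Lemma coef2P p q : (forall n l, coef2 p n l = coef2 q n l) -> p = q.
Proof. by move=> pq; apply/polyP => n; apply/polyP => l; apply: pq. Qed.

Lemma coef2_trunc N F n l :
  coef2 (trunc N F) n l = if (n <= N)%N && (l <= N)%N then F n l else 0.
Proof. by rewrite /coef2 coef_poly ltnS; case: (n <= N)%N; rewrite ?coef0 // coef_poly ltnS. Qed.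

Lemma coef2_sub p q n l : coef2 (p - q) n l = coef2 p n l - coef2 q n l.
Proof. by rewrite /coef2 !coefB. Qed.

Lemma coef2_mul p q n l : coef2 (p * q) n l = bser_mul (coef2 p) (coef2 q) n l.
Proof. by rewrite /coef2 coefM coef_sum; apply: eq_bigr => i _; rewrite coefM. Qed.

Lemma coef2_one n l : coef2 1 n l = one_ser n l.
Proof. by rewrite /coef2 /one_ser coef1; case: n => [|n] /=; rewrite ?coef1 ?coef0. Qed.

Lemma coef2_xu p n l : coef2 (xu * p) n l = bser_mul_xu (coef2 p) n l.
Proof.
rewrite /coef2 /xu -mulrA coefXM; case: n => [|n] /=; first by rewrite coef0.
by rewrite coefCM coefXM; case: l.
Qed.

Lemma eq_trunc N F G : (forall n l, F n l = G n l) -> trunc N F = trunc N G.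
Proof. by move=> FG; apply: coef2P => n l; rewrite !coef2_trunc FG. Qed.

Lemma trunc_add N F G : trunc N (bser_add F G) = trunc N F + trunc N G.
Proof.
apply: coef2P => n l; rewrite /coef2 !coefD -!/(coef2 _ n l) !coef2_trunc.
by case: ifP; rewrite ?addr0.
Qed.

Lemma trunc_sub N F G : trunc N (bser_sub F G) = trunc N F - trunc N G.
Proof. by apply: coef2P => n l; rewrite coef2_sub !coef2_trunc; case: ifP; rewrite ?subr0. Qed.

Lemma trunc_one N : trunc N one_ser = 1.
Proof.
apply: coef2P => n l; rewrite coef2_trunc coef2_one /one_ser.
by case: n => [|n]; case: l => [|l]; rewrite ?andbF //=; case: ifP.
Qed.

Lemma trunc_xu N : (0 < N)%N -> trunc N xu_ser = xu.
Proof.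
move=> N0; apply: coef2P => n l; rewrite coef2_trunc -[xu]mulr1 coef2_xu /xu_ser.
have -> : bser_mul_xu (coef2 1) n l = ((n == 1%N) && (l == 1%N))%:R.
  by case: n l => [|[|n]] [|[|l]]; rewrite /= ?coef2_one.
case: ifP => // /nandP[] outN; [have : n != 1%N | have : l != 1%N];
  by [apply: contraNneq outN => -> | move/negbTE->; rewrite ?andbF].
Qed.

Definition vanishes N (e : {poly {poly int}}) :=
  forall n l, (n <= N)%N -> (l <= N)%N -> coef2 e n l = 0.

Lemma vanishesD N e1 e2 : vanishes N e1 -> vanishes N e2 -> vanishes N (e1 + e2).
Proof. by move=> v1 v2 n l nN lN; rewrite /coef2 !coefD -!/(coef2 _ n l) v1 ?v2 ?addr0. Qed.

Lemma vanishesB N e1 e2 : vanishes N e1 -> vanishes N e2 -> vanishes N (e1 - e2).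
Proof. by move=> v1 v2 n l nN lN; rewrite coef2_sub v1 ?v2 ?subr0. Qed.

Lemma vanishesMl N r e : vanishes N e -> vanishes N (r * e).
Proof.
move=> ve n l nN lN; rewrite coef2_mul; apply: big1 => i _; apply: big1 => j _.
by rewrite ve ?mulr0 // (leq_trans (leq_subr _ _)).
Qed.

Lemma bser_mul_trunc N F G n l : (n <= N)%N -> (l <= N)%N ->
  bser_mul F G n l = coef2 (trunc N F * trunc N G) n l.
Proof.
move=> nN lN; rewrite coef2_mul; apply: eq_bigr => i _; apply: eq_bigr => j _.
have iN : (i <= N)%N by rewrite (leq_trans _ nN) // -ltnS.
have jN : (j <= N)%N by rewrite (leq_trans _ lN) // -ltnS.
by rewrite !coef2_trunc iN jN !(leq_trans (leq_subr _ _)).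
Qed.

Lemma vanishes_trunc_mul N F G : vanishes N (trunc N (bser_mul F G) - trunc N F * trunc N G).
Proof.
by move=> n l nN lN; rewrite coef2_sub coef2_trunc nN lN (bser_mul_trunc _ _ nN lN) subrr.
Qed.

Lemma bser_mul_xu_trunc N F n l : (n <= N)%N -> (l <= N)%N ->
  bser_mul_xu (coef2 (trunc N F)) n l = bser_mul_xu F n l.
Proof. by case: n l => [|n] [|l] //= nN lN; rewrite coef2_trunc (ltnW nN) (ltnW lN). Qed.

Theorem proposition2p1 :
  bser_mul gxu (bser_sub (bser_add Sx Sxu) (bser_mul Sx Sxu))
  = bser_mul_xu (bser_mul Sx Sxu).
Proof.
apply: functional_extensionality => n; apply: functional_extensionality => l.
pose N := (maxn n l).+1.
have nN : (n <= N)%N by rewrite leqW ?leq_maxl.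
have lN : (l <= N)%N by rewrite leqW ?leq_maxr.
set S := trunc N Sx; set U := trunc N Sxu; set T := trunc N (bser_mul Sx Sxu).
set g := trunc N gxu; set p := trunc N (indec_ser false); set q := trunc N (indec_ser true).
have eG : vanishes N (g - U * p) by rewrite /g (eq_trunc _ gxuE); apply: vanishes_trunc_mul.
have eP : vanishes N (p - xu - q * (S - 1)).
  rewrite /p (eq_trunc _ indec_ser_skewE) trunc_add trunc_xu // [xu + _]addrC addrK.
  by rewrite -(trunc_one N) -trunc_sub; apply: vanishes_trunc_mul.
have eQ : vanishes N (q - xu - (U - 1) * p).
  rewrite /q (eq_trunc _ indec_ser_sumE) trunc_add trunc_xu // [xu + _]addrC addrK.
  by rewrite -(trunc_one N) -trunc_sub; apply: vanishes_trunc_mul.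
have eT : vanishes N (T - S * U) by apply: vanishes_trunc_mul.
(* Eliminating [p] and [q] from the three identities. *)
have key : g * (S + U - T) - xu * T = (S + U - S * U) * (g - U * p)
    + U * ((p - xu - q * (S - 1)) + (S - 1) * (q - xu - (U - 1) * p)) - (g + xu) * (T - S * U).
  by ring.
have := vanishesB (vanishesD (vanishesMl (S + U - S * U) eG)
  (vanishesMl U (vanishesD eP (vanishesMl (S - 1) eQ)))) (vanishesMl (g + xu) eT).
rewrite -key => /(_ n l nN lN) /eqP; rewrite coef2_sub subr_eq0 => /eqP.
rewrite /S /U /T -trunc_add -trunc_sub -(bser_mul_trunc _ _ nN lN) coef2_xu => ->.
exact: bser_mul_xu_trunc.
Qed.
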